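(* Let $G$ be a finite group. Then the poset $C(G)$ of cyclic subgroups of $G$ possesses exactly one breaking point if and only if $G$ is either a cyclic group of order $p^2$ for some prime $p$, or a generalized quaternion $2$-group $Q_{2^n}$ for some $n\geq 3$.
   Context: For a finite group $G$, $C(G)$ denotes the set of cyclic subgroups of $G$, partially ordered by inclusion. A breaking point of $C(G)$ is a subgroup $H\in C(G)$ with $H\neq 1$ and $H\neq G$ such that for every $X\in C(G)$ we have $X\leq H$ or $H\leq X$. For $n\geq 3$, the generalized quaternion $2$-group is $Q_{2^n}=\langle a,b \mid a^{2^{n-2}}=b^2,\ a^{2^{n-1}}=1,\ b^{-1}ab=a^{-1}\rangle$, of order $2^n$. *)

From mathcomp Require Import all_boot all_fingroup all_solvable.
Set Implicit Arguments. Unset Strict Implicit. Unset Printing Implicit Defensive.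
Local Open Scope group_scope.

Definition breaking_point (gT : finGroupType) (G H : {group gT}) : Prop :=
  [/\ H \subset G, cyclic H, H :!=: 1, H :!=: G &
      forall X : {group gT}, X \subset G -> cyclic X ->
        X \subset H \/ H \subset X].

(* A breaking point H is comparable with <[x]> for every x in G: either x lies
   in H or H lies in <[x]>.  Splitting an element outside H into its p- and
   p'-parts, for a prime p dividing #|H|, shows that G is a p-group; as the
   subgroups of a cyclic p-group form a chain, every nontrivial subgroup of a
   breaking point is again one.  A unique breaking point therefore has prime
   order p and contains every element of order p, so G has a unique subgroup
   of order p, hence is cyclic or generalized quaternion; a cyclic p-group of
   order at least p^3 has breaking points of orders p and p^2.  Conversely,
   when 'Ohm_1(G) has order p it lies in every nontrivial subgroup, so it is a
   breaking point; it is the only one in a cyclic group of order p^2 for order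
   reasons, and in Q_(2^n) because breaking points are central and the centre
   has order 2. *)

From mathcomp Require Import all_boot all_fingroup all_solvable.
Local Open Scope group_scope.

Section BreakingPoints.

Context {gT : finGroupType}.
Implicit Types (p : nat) (G H K X : {group gT}).

Definition unique_breaking_point G H :=
  breaking_point G H /\ forall K, breaking_point G K -> K = H.

Lemma cyclic_pgroup_sub_total {p G H K} :
  cyclic G -> p.-group G -> H \subset G -> K \subset G ->
  H \subset K \/ K \subset H.
Proof.
move=> cG pG sHG sKG.
rewrite -(cardSg_cyclic cG sHG sKG) -(cardSg_cyclic cG sKG sHG).
have [a ->] := p_natP (pgroupS sHG pG); have [b ->] := p_natP (pgroupS sKG pG).
have [ab | /ltnW ba] := leqP a b; [left | right]; exact: dvdn_exp2l.
Qed.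

Lemma cyclic_pgroup_breaking_point {p G H} :
  cyclic G -> p.-group G -> H \subset G -> H :!=: 1 -> H :!=: G ->
  breaking_point G H.
Proof.
move=> cG pG sHG ntH nHG; split=> //; first exact: cyclicS sHG cG.
move=> X sXG _; exact: cyclic_pgroup_sub_total cG pG sXG sHG.
Qed.

Lemma breaking_point_cycle {G H x} :
  breaking_point G H -> x \in G -> x \in H \/ H \subset <[x]>.
Proof.
case=> _ _ _ _ cmp Gx.
by case: (cmp <[x]>%G); rewrite ?cycle_subG ?cycle_cyclic //; [left | right].
Qed.

Lemma breaking_point_center {G H} : breaking_point G H -> H \subset 'Z(G).
Proof.
move=> bH; have [sHG cH _ _ _] := bH.
rewrite subsetI sHG centsC; apply/subsetP=> x Gx.
have [Hx | sHx] := breaking_point_cycle bH Gx.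
  by apply: subsetP Hx; apply: cyclic_abelian.
by rewrite -sub_cent1; apply: subset_trans sHx _; rewrite cycle_subG cent1id.
Qed.

Lemma breaking_point_pgroup {p G H} :
  breaking_point G H -> prime p -> p %| #|H| -> p.-group G.
Proof.
move=> bH p_pr pH; have [sHG _ _ nHG _] := bH.
have constt_in_G pi x : x \in G -> x.`_pi \in G.
  by move=> Gx; rewrite groupX.
have pgH : p.-group H.
  have /subsetPn[x Gx notHx] : ~~ (G \subset H).
    by apply: contra nHG => sGH; rewrite eqEsubset sHG.
  have xp'_in_H : x.`_p^' \in H.
    have [// | sHxp'] := breaking_point_cycle bH (constt_in_G p^' x Gx).
    have : p^'.-group H by apply: pgroupS sHxp' (p_elt_constt _ _).
    by rewrite /pgroup p'natE // pH.
  have [xp_in_H | sHxp] := breaking_point_cycle bH (constt_in_G p x Gx).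
    by rewrite -(consttC p x) groupM in notHx.
  exact: pgroupS sHxp (p_elt_constt _ _).
apply/pgroupP=> q q_pr /(Cauchy q_pr)[y Gy oy].
have [Hy | sHy] := breaking_point_cycle bH Gy.
  by apply: (pgroupP pgH); rewrite // -oy cardSg ?cycle_subG.
have : p %| q by rewrite -oy (dvdn_trans pH) ?cardSg.
by rewrite dvdn_prime2 // inE eq_sym.
Qed.

Lemma breaking_pointS {p G H K} :
  p.-group H -> breaking_point G H -> K \subset H -> K :!=: 1 ->
  breaking_point G K.
Proof.
move=> pH [sHG cH _ nHG cmp] sKH ntK.
have sKG := subset_trans sKH sHG.
split=> //; first exact: cyclicS sKH cH.
  by apply: contra nHG => /eqP eqKG; rewrite eqEsubset sHG -eqKG.
move=> X sXG cX; have [sXH | sHX] := cmp X sXG cX.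
  exact: cyclic_pgroup_sub_total cH pH sXH sKH.
by right; apply: subset_trans sHX.
Qed.

Lemma unique_breaking_point_prime {G H} :
  unique_breaking_point G H -> exists p, [/\ prime p, p.-group G & #|H| = p].
Proof.
move=> [bH uH]; have [sHG _ ntH _ _] := bH.
have p_pr : prime (pdiv #|H|) by rewrite pdiv_prime // cardG_gt1.
have pG := breaking_point_pgroup bH p_pr (pdiv_dvd _).
exists (pdiv #|H|); split=> //.
have [y Hy oy] := Cauchy p_pr (pdiv_dvd _).
have ntY : <[y]> :!=: 1 by rewrite trivg_card1 -orderE oy gtn_eqF ?prime_gt1.
have bY : breaking_point G <[y]>%G.
  by apply: breaking_pointS (pgroupS sHG pG) bH _ ntY; rewrite cycle_subG.
by rewrite -[in LHS](uH _ bY) -orderE.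
Qed.

Lemma Ohm1_sub_breaking_point {p G H} :
  prime p -> breaking_point G H -> #|H| = p -> 'Ohm_1(G) \subset H.
Proof.
move=> p_pr bH oH; rewrite Ohm1Eprime gen_subG.
apply/subsetP=> y /setIdP[Gy y_pr].
have [// | sHy] := breaking_point_cycle bH Gy.
have : p %| #[y] by rewrite -oH orderE cardSg.
rewrite dvdn_prime2 // => /eqP oy.
suffices -> : H :=: <[y]> by apply: cycle_id.
by apply/eqP; rewrite eqEcard sHy -orderE -oy oH leqnn.
Qed.

Lemma Ohm1_sub_nontrivial {p G X} :
  prime p -> #|'Ohm_1(G)| = p -> X \subset G -> X :!=: 1 ->
  'Ohm_1(G) \subset X.
Proof.
move=> p_pr oO sXG ntX; have sOXG := OhmS 1 sXG.
have oOX : #|'Ohm_1(X)| = p.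
  by apply/(prime_nt_dvdP p_pr); rewrite -?trivg_card1 ?Ohm1_eq1 // -oO cardSg.
suffices <- : 'Ohm_1(X) = 'Ohm_1(G) by apply: Ohm_sub.
by apply/eqP; rewrite eqEcard sOXG oO oOX leqnn.
Qed.

Lemma Ohm1_unique_breaking_point {p G} :
  prime p -> #|'Ohm_1(G)| = p -> p < #|G| ->
  (forall K, breaking_point G K -> #|K| <= p) ->
  unique_breaking_point G 'Ohm_1(G).
Proof.
move=> p_pr oO ltpG leKp; split.
  split.
  - exact: Ohm_sub.
  - by apply: prime_cyclic; rewrite oO.
  - by rewrite trivg_card1 oO gtn_eqF ?prime_gt1.
  - by apply: contraTneq ltpG => <-; rewrite oO ltnn.
  - move=> X sXG _; have [-> | ntX] := eqVneq X 1%G; first by left; apply: sub1G.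
    by right; apply: Ohm1_sub_nontrivial p_pr oO sXG ntX.
move=> K bK; have [sKG _ ntK _ _] := bK.
apply/val_inj/eqP; rewrite /= eq_sym eqEcard oO leKp // andbT.
exact: Ohm1_sub_nontrivial p_pr oO sKG ntK.
Qed.

Lemma card_cyclic_unique_breaking_point {p G H} :
  prime p -> cyclic G -> p.-group G -> unique_breaking_point G H ->
  #|G| = (p ^ 2)%N.
Proof.
move=> p_pr cG pG [bH uH]; have [sHG _ ntH nHG _] := bH.
have p_gt1 := prime_gt1 p_pr.
have [k oG] := p_natP pG; have [a oH] := p_natP (pgroupS sHG pG).
have a_gt0 : 0 < a.
  by rewrite lt0n; apply: contraNneq ntH => a0; rewrite trivg_card1 oH a0.
have ltak : a < k.
  by rewrite -(ltn_exp2l _ _ p_gt1) -oH -oG proper_card // properEneq nHG.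
have [ltk2 | lt2k | k2] := ltngtP k 2; last by rewrite oG k2.
  by move: (leq_ltn_trans a_gt0 ltak); rewrite ltnNge -ltnS ltk2.
have bp_of_order r : 0 < r < k -> exists L, breaking_point G L /\ #|L| = (p ^ r)%N.
  case/andP=> r_gt0 ltrk.
  have lerG : r <= logn p #|G| by rewrite oG (pfactorK _ p_pr) ltnW.
  have [L [sLG _ oL]] := normal_pgroup pG (normal_refl G) lerG.
  exists L; split=> //; apply: cyclic_pgroup_breaking_point cG pG sLG _ _.
    by rewrite trivg_card1 oL -(expn0 p) eqn_exp2l // -lt0n.
  apply: contraTneq ltrk => eqLG.
  by rewrite -(ltn_exp2l _ _ p_gt1) -oL -oG eqLG ltnn.
have [L1 [bL1 oL1]] := bp_of_order 1%N (ltnW lt2k).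
have [L2 [bL2 oL2]] := bp_of_order 2%N lt2k.
by move/eqP: oL2; rewrite (uH _ bL2) -(uH _ bL1) oL1 eqn_exp2l.
Qed.

Lemma unique_breaking_point_Ohm1 {G H} :
  unique_breaking_point G H ->
  exists p, [/\ prime p, p.-group G, G :!=: 1 & #|'Ohm_1(G)| = p].
Proof.
move=> uH; have [p [p_pr pG oH]] := unique_breaking_point_prime uH.
have [bH _] := uH; have [sHG _ ntH _ _] := bH.
have ntG : G :!=: 1 by apply: contraNneq ntH => G1; rewrite -subG1 -G1.
exists p; split=> //; apply/(prime_nt_dvdP p_pr).
  by rewrite -trivg_card1 Ohm1_eq1.
by rewrite -oH cardSg // (Ohm1_sub_breaking_point p_pr bH oH).
Qed.

Lemma cyclic_unique_breaking_point {p G} :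
  prime p -> cyclic G -> #|G| = (p ^ 2)%N ->
  unique_breaking_point G 'Ohm_1(G).
Proof.
move=> p_pr cG oG; have p_gt1 := prime_gt1 p_pr.
have pG : p.-group G by rewrite /pgroup oG pnatX pnat_id.
have p_lt_G : p < #|G| by rewrite oG -{1}(expn1 p) ltn_exp2l.
have ntG : G :!=: 1 by rewrite trivg_card1 gtn_eqF ?(ltn_trans p_gt1).
apply: Ohm1_unique_breaking_point p_pr (Ohm1_cyclic_pgroup_prime cG pG ntG) p_lt_G _.
move=> K [sKG _ _ nKG _]; have [a oK] := p_natP (pgroupS sKG pG).
rewrite oK -{2}(expn1 p) leq_exp2l // -ltnS -(ltn_exp2l _ _ p_gt1) -oK -oG.
by rewrite proper_card // properEneq nKG.
Qed.

Lemma quaternion_unique_breaking_point {n G} :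
  2 < n -> G \isog 'Q_(2 ^ n) -> unique_breaking_point G 'Ohm_1(G).
Proof.
move=> n_gt2 isoG.
have oG : #|G| = (2 ^ n)%N by rewrite (card_isog isoG) card_quaternion.
have pG : 2.-group G by rewrite /pgroup oG pnatX pnat_id.
have two_lt_G : 2 < #|G| by rewrite oG -{1}(expn1 2) ltn_exp2l // ltnW.
have ntG : G :!=: 1 by rewrite trivg_card1 gtn_eqF // ltnW.
have quatG : extremal_class G = Quaternion by apply/quaternion_classP; exists n.
have oO : #|'Ohm_1(G)| = 2 by apply/(prime_Ohm1P pG ntG); rewrite quatG eqxx orbT.
have [[x y] genG _] := generators_quaternion n_gt2 isoG.
have [_ _ [_ oZ _ _ _] _ _] := quaternion_structure n_gt2 genG isoG.
apply: (Ohm1_unique_breaking_point (isT : prime 2)) oO two_lt_G _ => K bK.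
by rewrite -oZ subset_leq_card // breaking_point_center.
Qed.

End BreakingPoints.

Theorem mainTheorem3 (gT : finGroupType) (G : {group gT}) :
  (exists H : {group gT},
     breaking_point G H /\
     forall K : {group gT}, breaking_point G K -> K = H)
  <->
  ((exists p : nat, prime p /\ cyclic G /\ #|G| = (p ^ 2)%N)
   \/ (exists n : nat, 3 <= n /\ G \isog 'Q_(2 ^ n))).
Proof.
split=> [[H uH] | [[p [p_pr [cG oG]]] | [n [n_gt2 isoG]]]].
- have [p [p_pr pG ntG oO]] := unique_breaking_point_Ohm1 uH.
  have [cG | /andP[_ /eqP/quaternion_classP[n n_gt2 isoG]]] :=
    orP (introT (prime_Ohm1P pG ntG) oO).
    left; exists p; split=> //; split=> //.
    exact: card_cyclic_unique_breaking_point p_pr cG pG uH.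
  by right; exists n.
- by exists 'Ohm_1(G)%G; apply: cyclic_unique_breaking_point p_pr cG oG.
by exists 'Ohm_1(G)%G; apply: quaternion_unique_breaking_point n_gt2 isoG.
Qed.
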